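(* Let $x$ be a random input with true label $Y$, taking labels in a finite set. Let $S^A_y(x)$ and $S^B_y(x)$ be two real-valued class-score functions, with predictions $\hat y_A(x)=\arg\max_y S^A_y(x)$ and $\hat y_B(x)=\arg\max_y S^B_y(x)$. Define $\Delta_A(x)=S^A_{\hat y_A(x)}(x)-\max_{y\neq\hat y_A(x)}S^A_y(x)$ and $E(x)=\max_y|S^A_y(x)-S^B_y(x)|$. Then for every $t\ge 0$, $$\Pr[\hat y_A(x)\ne\hat y_B(x)]\le\Pr[\Delta_A(x)\le 2t]+\Pr[E(x)>t],$$ and consequently, with $\mathrm{Acc}(A)=\Pr[\hat y_A(x)=Y]$ and $\mathrm{Acc}(B)=\Pr[\hat y_B(x)=Y]$, $$|\mathrm{Acc}(A)-\mathrm{Acc}(B)|\le\Pr[\hat y_A(x)\ne\hat y_B(x)]\le\Pr[\Delta_A(x)\le 2t]+\Pr[E(x)>t].$$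
   Context: The scores $S^A_y,S^B_y$ are cumulative class scores of two classifiers (sums of per-block goodness values); predictions are given by argmax over labels. *)

From HB Require Import structures.
From mathcomp Require Import all_boot all_order all_algebra.
From mathcomp Require Import all_classical all_reals all_analysis.
Set Implicit Arguments. Unset Strict Implicit. Unset Printing Implicit Defensive.
Import Order.TTheory GRing.Theory Num.Theory.
Local Open Scope ring_scope.

(* Prediction: an arg max over labels of the class scores; ties are broken
   deterministically (via the enumeration of L, starting from default y0). *)
Definition predict (R : realType) (T : Type) (L : finType) (y0 : L)
  (S : L -> T -> R) (x : T) : L :=
  Order.arg_max y0 xpredT (fun y => S y x).

(* Margin Delta(x) = S_{yhat}(x) - max_{y <> yhat} S_y(x), in \bar R
   (max over the empty set is -oo, so Delta = +oo when there is one label). *)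
Definition margin (R : realType) (T : Type) (L : finType) (y0 : L)
  (S : L -> T -> R) (x : T) : \bar R :=
  let yh := predict y0 S x in
  ((S yh x)%:E - \big[maxe/-oo%E]_(y | y != yh) (S y x)%:E)%E.

Definition score_gap (R : realType) (T : Type) (L : finType)
  (SA SB : L -> T -> R) (x : T) : R :=
  \big[Num.max/0]_(y : L) `|SA y x - SB y x|.

From HB Require Import structures.
From mathcomp Require Import all_boot all_order all_algebra.
From mathcomp Require Import all_classical all_reals all_analysis.
From mathcomp Require Import measurable_realfun lra.
Set Implicit Arguments.
Unset Strict Implicit.
Unset Printing Implicit Defensive.
Import Order.TTheory GRing.Theory Num.Theory.
Local Open Scope classical_set_scope.
Local Open Scope ring_scope.

(* If the predictions of A and B differ at x, then, because yB maximizes S^B,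
   S^A_{yA} - S^A_{yB} <= (S^B_{yA} + E) - (S^B_{yB} - E) <= 2 E, so the margin
   of A is at most 2 E(x).  Hence {yA <> yB} is covered by {Delta_A <= 2t} and
   {E > t}, and the union bound gives the first inequality.  The second one
   holds because {yA = Y} and {yB = Y} differ only inside {yA <> yB}.
   Measurability of the events rests on the fact that an arg max over a finite
   set of labels only depends on the finite table of comparisons S_i <= S_j. *)

Section finite_valued_measurability.
Context d (T : measurableType d).

Lemma measurable_set_bool (f : T -> bool) :
  measurable_fun setT f -> measurable [set x | f x].
Proof. by move=> mf; rewrite -[X in measurable X]setTI; exact: mf. Qed.

Lemma measurable_ffun_fiber (I : finType) (U : Type) (h : I -> T -> bool)
    (g : {ffun I -> bool} -> U) (u : U) :
  (forall i, measurable_fun setT (h i)) ->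
  measurable ((fun x => g [ffun i => h i x]) @^-1` [set u]).
Proof.
move=> mh.
have -> : (fun x => g [ffun i => h i x]) @^-1` [set u] =
    \bigcup_(c in [set c | g c = u]) \bigcap_(i in setT) (h i @^-1` [set c i]).
  apply/seteqP; split => [x /= gxu|x [c /= gcu hc]].
    by exists [ffun i => h i x] => // i _; rewrite /= ffunE.
  by rewrite -gcu; congr g; apply/ffunP => i; rewrite ffunE; exact: hc.
apply: fin_bigcup_measurable => [|c _]; first exact: finite_finset.
apply: fin_bigcap_measurable => [|i _]; first exact: finite_finset.
by rewrite -[X in measurable X]setTI; exact: mh.
Qed.

Lemma measurable_eq_fibers (L : finType) (f g : T -> L) :
  (forall a, measurable (f @^-1` [set a])) ->
  (forall a, measurable (g @^-1` [set a])) ->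
  measurable [set x | f x = g x].
Proof.
move=> mf mg.
have -> : [set x | f x = g x] =
    \bigcup_(a in setT) (f @^-1` [set a] `&` g @^-1` [set a]).
  apply/seteqP; split => [x /= fg|x [a _ [/= -> ->]]] //.
  by exists (f x).
apply: fin_bigcup_measurable => [|a _]; first exact: finite_finset.
exact: measurableI.
Qed.

End finite_valued_measurability.

Section predict_margin.
Context (R : realType) (T : Type) (L : finType) (y0 : L).
Implicit Types (S SA SB : L -> T -> R) (x : T).

Lemma predict_ge S x y : S y x <= S (predict y0 S x) x.
Proof. by rewrite /predict; case: arg_maxP => // i _; apply. Qed.

Definition top_of_comparisons (c : {ffun L * L -> bool}) : L :=
  odflt y0 [pick i | [forall j, c (j, i)]].

Lemma predict_comparisons S x :
  predict y0 S x = top_of_comparisons [ffun p => S p.1 x <= S p.2 x].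
Proof.
rewrite /predict /Order.arg_max /extremum; congr odflt.
by apply: eq_pick => i /=; apply: eq_forallb => j; rewrite ffunE.
Qed.

Lemma margin_leP S x (r : R) :
  reflect (exists2 y, y != predict y0 S x & S (predict y0 S x) x - S y x <= r)
          (margin y0 S x <= r%:E)%E.
Proof.
rewrite /margin; set a := predict y0 S x.
set M := (\big[maxe/-oo]_(y | y != a) (S y x)%:E)%E.
apply: (iffP idP) => [|[y ya Sayr]]; last first.
  have : ((S y x)%:E <= M)%E by exact: le_bigmax_cond.
  case: M => [m| |] //=; last by rewrite addeNy leNye.
  by rewrite lee_fin -EFinB lee_fin => ?; lra.
move=> margin_le; apply: contrapT => no_y.
have : (M < (S a x - r)%:E)%E.
  apply/bigmax_ltP; split=> [|y ya]; first by rewrite ltNyr.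
  rewrite lte_fin ltNge; apply/negP => Sy; apply: no_y; exists y => //; lra.
move: margin_le; case: M => [m| |] //=.
by rewrite -EFinD !lee_fin lte_fin => ? ?; lra.
Qed.

Lemma score_gap_gtP SA SB x (t : R) : 0 <= t ->
  reflect (exists y, t < `|SA y x - SB y x|) (t < score_gap SA SB x).
Proof.
move=> t0; apply: (iffP idP) => [gap_gt|[y ty]]; last first.
  exact: lt_le_trans ty (le_bigmax _ (fun y => `|SA y x - SB y x|) y).
apply: contrapT => no_y; move: gap_gt; rewrite ltNge => /negP; apply.
apply/bigmax_leP; split=> // y _; rewrite leNgt; apply/negP => ty.
by apply: no_y; exists y.
Qed.

Lemma margin_le_score_gap SA SB x :
  predict y0 SA x != predict y0 SB x ->
  (margin y0 SA x <= (2 * score_gap SA SB x)%:E)%E.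
Proof.
set yA := predict y0 SA x; set yB := predict y0 SB x => neqAB.
apply/margin_leP; exists yB; first by rewrite eq_sym.
have := le_bigmax 0 (fun y => `|SA y x - SB y x|) yA.
have := le_bigmax 0 (fun y => `|SA y x - SB y x|) yB.
have := predict_ge SB x yA.
rewrite -/yB -/(score_gap SA SB x) !ler_norml => ? /andP[? ?] /andP[? ?]; lra.
Qed.

End predict_margin.

Section score_events.
Context d (T : measurableType d) (R : realType) (L : finType) (y0 : L).
Variable S : L -> T -> R.
Hypothesis mS : forall y, measurable_fun setT (S y).

Lemma measurable_predict_fiber (a : L) :
  measurable (predict y0 S @^-1` [set a]).
Proof.
rewrite (funext (predict_comparisons y0 S)).
by apply: (measurable_ffun_fiber (h := fun p x => S p.1 x <= S p.2 x)) => p;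
  exact: measurable_fun_ler.
Qed.

Lemma measurable_margin_le (r : R) :
  measurable [set x | (margin y0 S x <= r%:E)%E].
Proof.
have -> : [set x | (margin y0 S x <= r%:E)%E] =
    \bigcup_(a in setT) (predict y0 S @^-1` [set a] `&`
      \bigcup_(y in [set y | y != a]) [set x | S a x - S y x <= r]).
  apply/seteqP; split => [x /margin_leP[y ya Syr]|x [a _ [/= <- [y ya Syr]]]].
    by exists (predict y0 S x) => //; split => //; exists y.
  by apply/margin_leP; exists y.
apply: fin_bigcup_measurable => [|a _]; first exact: finite_finset.
apply: measurableI; first exact: measurable_predict_fiber.
apply: fin_bigcup_measurable => [|y _]; first exact: finite_finset.
apply: measurable_set_bool; apply: measurable_fun_ler => //.
exact: measurable_funB.
Qed.

End score_events.

Lemma measurable_score_gap_gt d (T : measurableType d) (R : realType)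
    (L : finType) (SA SB : L -> T -> R) (t : R) :
  (forall y, measurable_fun setT (SA y)) ->
  (forall y, measurable_fun setT (SB y)) -> 0 <= t ->
  measurable [set x | t < score_gap SA SB x].
Proof.
move=> mSA mSB t0.
have -> : [set x | t < score_gap SA SB x] =
    \bigcup_(y in setT) [set x | t < `|SA y x - SB y x|].
  apply/seteqP; split => [x /score_gap_gtP[//|y ty]|x [y _ ty]].
    by exists y.
  by apply/score_gap_gtP => //; exists y.
apply: fin_bigcup_measurable => [|y _]; first exact: finite_finset.
apply: measurable_set_bool; apply: measurable_fun_ltr => //.
by apply: measurableT_comp; [exact: normr_measurable|exact: measurable_funB].
Qed.

Lemma abse_subr_le (R : realDomainType) (x y z : \bar R) :
  x \is a fin_num -> y \is a fin_num ->
  (x <= y + z)%E -> (y <= x + z)%E -> (`|x - y| <= z)%E.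
Proof.
move: x y z => [a| |] // [b| |] // [c| |] // _ _; last by move=> *; exact: leey.
rewrite -EFinN -!EFinD abse_EFin !lee_fin ler_norml => ? ?.
by apply/andP; split; lra.
Qed.

Section measure_bounds.
Context d (T : measurableType d) (R : realType).

Lemma le_measure_setU (mu : {measure set T -> \bar R}) (A B C : set T) :
  measurable A -> measurable B -> measurable C -> A `<=` B `|` C ->
  (mu A <= mu B + mu C)%E.
Proof.
move=> mA mB mC sABC; apply: le_trans (measureU2 mu mB mC).
by apply: le_measure; rewrite ?inE //; exact: measurableU.
Qed.

Lemma abse_measureB_le (mu : {finite_measure set T -> \bar R}) (A B D : set T) :
  measurable A -> measurable B -> measurable D ->
  A `<=` B `|` D -> B `<=` A `|` D -> (`|mu A - mu B| <= mu D)%E.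
Proof.
move=> mA mB mD sABD sBAD.
by apply: abse_subr_le; rewrite ?fin_num_measure //; exact: le_measure_setU.
Qed.

Lemma abse_measure_eqB_le (mu : {finite_measure set T -> \bar R}) (V : Type)
    (f g h : T -> V) :
  measurable [set x | f x = h x] -> measurable [set x | g x = h x] ->
  measurable [set x | f x <> g x] ->
  (`|mu [set x | f x = h x] - mu [set x | g x = h x]|
     <= mu [set x | f x <> g x])%E.
Proof.
move=> mf mg mfg; apply: abse_measureB_le => // x /= eqx.
  have [|neq] := pselect (g x = h x); [by left|right => fg].
  by apply: neq; rewrite -fg.
have [|neq] := pselect (f x = h x); [by left|right => fg].
by apply: neq; rewrite fg.
Qed.

End measure_bounds.

Theorem proposition2 (d : measure_display) (T : measurableType d)
  (R : realType) (P : probability T R) (L : finType) (y0 : L)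
  (Y : T -> L) (SA SB : L -> T -> R)
  (mY : forall y : L, measurable (Y @^-1` [set y]))
  (mSA : forall y : L, measurable_fun setT (SA y))
  (mSB : forall y : L, measurable_fun setT (SB y))
  (t : R) (t0 : 0 <= t) :
  let yA := predict y0 SA in
  let yB := predict y0 SB in
  let accA := P [set x | yA x = Y x] in
  let accB := P [set x | yB x = Y x] in
  let dis := P [set x | yA x <> yB x] in
  let bound := (P [set x | (margin y0 SA x <= (2 * t)%R%:E)%E]
                + P [set x | (t < score_gap SA SB x)%R])%E in
  (dis <= bound)%E /\ (`| accA - accB | <= dis)%E /\ (`| accA - accB | <= bound)%E.
Proof.
move=> yA yB accA accB dis bound.
have mpA := measurable_predict_fiber y0 mSA.
have mpB := measurable_predict_fiber y0 mSB.
have dis_le : (dis <= bound)%E.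
  apply: le_measure_setU.
  - exact/measurableC/measurable_eq_fibers.
  - exact: measurable_margin_le.
  - exact: measurable_score_gap_gt.
  move=> x /= /eqP neqAB; have [gap_le|] := leP (score_gap SA SB x) t; last by right.
  left; apply: le_trans (margin_le_score_gap neqAB) _.
  by rewrite lee_fin ler_pM2l.
have acc_le : (`| accA - accB | <= dis)%E.
  by apply: abse_measure_eqB_le; [exact: measurable_eq_fibers..|
    exact/measurableC/measurable_eq_fibers].
by split => //; split => //; exact: le_trans dis_le.
Qed.
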